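(* Let $0\le m\le n$ and $\lambda=2^m1^{n-m}$. If $T,T'\in S(\lambda)$ have first-column entries $a_1,\dots,a_n$ and $a'_1,\dots,a'_n$ (top to bottom) with $\mathrm{dep}(a_i)=\mathrm{dep}(a'_i)$ for all $1\le i\le n$, then $T=T'$.
   Context: $\lambda=2^m1^{n-m}$ is the shape with $m$ rows of length $2$ followed by $n-m$ rows of length $1$ (left-justified), $N=n+m$ boxes. $S(\lambda)$: standard Young tableaux of shape $\lambda$ (entries $1,\dots,N$ once each, rows strictly increasing left to right, columns strictly increasing top to bottom). For an entry $v$ of $T$ in column $j$: $\mathrm{dep}(v)$ = (number of entries of column $j$ smaller than $v$) minus (number of entries of column $j+1$ smaller than $v$, or $0$ if there is no column $j+1$). *)

From mathcomp Require Import all_boot all_order all_algebra.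
Set Implicit Arguments. Unset Strict Implicit. Unset Printing Implicit Defensive.

(* A tableau of shape 2^m 1^(n-m) is given by its list of columns
   [:: c1; c2], each column listed top to bottom: c1 has n entries,
   c2 has m entries; row i (0-indexed) is (nth 0 c1 i) for i >= m and
   (nth 0 c1 i, nth 0 c2 i) for i < m. *)

Definition is_SYT_2m1 (n m : nat) (c1 c2 : seq nat) : bool :=
  [&& size c1 == n, size c2 == m,
      perm_eq (c1 ++ c2) (iota 1 (n + m)),
      sorted ltn c1, sorted ltn c2
    & all (fun i => nth 0 c1 i < nth 0 c2 i) (iota 0 m)].

(* dep of an entry v lying in column j (0-indexed) of the tableau given by
   its list of columns: #(entries of column j smaller than v) minus
   #(entries of column j+1 smaller than v) (0 if there is no column j+1,
   as nth [::] returns the empty column then). *)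
Definition dep (cols : seq (seq nat)) (j v : nat) : int :=
  (count (fun x => x < v) (nth [::] cols j))%:Z
  - (count (fun x => x < v) (nth [::] cols j.+1))%:Z.

From mathcomp Require Import all_boot all_order all_algebra.
From mathcomp Require Import zify.
Set Implicit Arguments. Unset Strict Implicit.

(* The k-th entry a of the first column (0-indexed) has exactly a - 1 smaller
   entries: k of them above it in the first column and the rest in the second
   column, so dep(a) = k - (a - 1 - k) = 2k + 1 - a.  Hence the depths of the
   first column determine it, and the second column is its sorted complement. *)

Lemma count_lt_nth_sorted (s : seq nat) i :
  sorted ltn s -> i < size s -> count (fun x => x < nth 0 s i) s = i.
Proof.
elim: s i => [|x s IH] i //= s_sorted lt_i_s.
have x_min : all (fun y => x < y) s by apply: order_path_min ltn_trans s_sorted.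
case: i lt_i_s => [|j] lt_j_s /=.
  rewrite ltnn add0n; apply/eqP; rewrite -leqn0 leqNgt -has_count.
  by apply/hasP => -[y /(allP x_min) ?]; lia.
have lt_x_nth : x < nth 0 s j by apply/(allP x_min)/mem_nth.
by rewrite lt_x_nth IH // (path_sorted s_sorted).
Qed.

Lemma count_lt_perm_iota (s : seq nat) N v :
  perm_eq s (iota 1 N) -> v \in s -> count (fun x => x < v) s = v.-1.
Proof.
move=> s_perm; rewrite (permP s_perm) (perm_mem s_perm) mem_iota => v_range.
have -> : N = v.-1 + (N - v.-1) by lia.
rewrite iotaD count_cat.
have -> : count (fun x => x < v) (iota 1 v.-1) = v.-1.
  by rewrite -[RHS](size_iota 1 v.-1); apply/eqP; rewrite -all_count;
     apply/allP => y; rewrite mem_iota; lia.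
have -> : count (fun x => x < v) (iota (1 + v.-1) (N - v.-1)) = 0.
  by apply/eqP; rewrite -leqn0 leqNgt -has_count; apply/hasP => -[y];
     rewrite mem_iota; lia.
by rewrite addn0.
Qed.

Lemma SYT_2m1P n m c1 c2 : is_SYT_2m1 n m c1 c2 ->
  [/\ size c1 = n, size c2 = m, perm_eq (c1 ++ c2) (iota 1 (n + m)),
      sorted ltn c1 & sorted ltn c2].
Proof. by case/and5P => /eqP -> /eqP -> ? ? /andP [? _]. Qed.

Lemma SYT_2m1_dep_col1 n m c1 c2 k : is_SYT_2m1 n m c1 c2 -> k < n ->
  dep [:: c1; c2] 0 (nth 0 c1 k) = (Posz (2 * k + 1) - Posz (nth 0%N c1 k))%R.
Proof.
case/SYT_2m1P => size_c1 _ c_perm c1_sorted _ lt_k_n.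
have a_in : nth 0 c1 k \in c1 ++ c2 by rewrite mem_cat mem_nth ?size_c1.
have := count_lt_perm_iota c_perm a_in.
rewrite /dep /= count_cat count_lt_nth_sorted ?size_c1 //.
move: a_in; rewrite (perm_mem c_perm) mem_iota; lia.
Qed.

Lemma sorted_cat2l_eq (s t t' : seq nat) :
  sorted ltn t -> sorted ltn t' -> perm_eq (s ++ t) (s ++ t') -> t = t'.
Proof.
move=> t_sorted t'_sorted; rewrite perm_cat2l => /perm_mem.
exact: (irr_sorted_eq ltn_trans ltnn t_sorted t'_sorted).
Qed.

Theorem mainTheorem16 (n m : nat) (c1 c2 c1' c2' : seq nat) :
  m <= n ->
  is_SYT_2m1 n m c1 c2 ->
  is_SYT_2m1 n m c1' c2' ->
  (forall i, i < n ->
     dep [:: c1; c2] 0 (nth 0 c1 i) = dep [:: c1'; c2'] 0 (nth 0 c1' i)) ->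
  c1 = c1' /\ c2 = c2'.
Proof.
move=> _ T T' same_dep.
have [size_c1 _ c_perm _ c2_sorted] := SYT_2m1P T.
have [size_c1' _ c'_perm _ c2'_sorted] := SYT_2m1P T'.
have eq_c1 : c1 = c1'.
  apply: (eq_from_nth (x0 := 0)) => [|k]; first by rewrite size_c1 size_c1'.
  rewrite size_c1 => lt_k_n; have := same_dep k lt_k_n.
  by rewrite (SYT_2m1_dep_col1 T) // (SYT_2m1_dep_col1 T') //; lia.
split=> //; apply: (sorted_cat2l_eq c2_sorted c2'_sorted (s := c1)).
by rewrite (perm_trans c_perm) // perm_sym eq_c1.
Qed.
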